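(* Let $n\ge 6$ and let $CTG_n$ be the set of chemical tricyclic graphs on $n$ vertices. Define the following subsets of $CTG_n$ (in each, all $m_{i,j}$ not listed are $0$): for $j=0,1,\dots,5$, $\gamma_{9+j}$ is the set of $G\in CTG_n$ with $n_4=0,n_3=4,n_2=n-4,n_1=0$, $m_{2,3}=2+2j$, $m_{3,3}=5-j$, $m_{2,2}=n-5-j$; and $\gamma_{65}$ is the set of $G\in CTG_n$ with $n_4=0,n_3=5,n_2=n-6,n_1=1$, $m_{1,2}=1$, $m_{2,3}=1$, $m_{3,3}=7$, $m_{2,2}=n-7$. Let $G_1\in\gamma_9$, $G_2\in\gamma_{10}$, $G_3\in\gamma_{11}$, $G_4\in\gamma_{12}$, $G_5\in\gamma_{13}$, $G_6\in\gamma_{14}$, $G_7\in\gamma_{65}$, and let $G\in CTG_n$ not belong to $\gamma_9\cup\cdots\cup\gamma_{14}\cup\gamma_{65}$. Then $SO(G_1)<SO(G_2)<SO(G_3)<SO(G_4)<SO(G_5)<SO(G_6)<SO(G_7)<SO(G)$.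
   Context: All graphs are simple and connected. A chemical graph is a graph with maximum degree at most $4$; a tricyclic graph is a connected graph with $n$ vertices and $n+2$ edges. $d_G(u)$ is the degree of $u$, $n_i$ the number of vertices of degree $i$, and $m_{i,j}$ the number of edges joining a vertex of degree $i$ to a vertex of degree $j$. The Sombor index is $SO(G)=\sum_{uv\in E(G)}\sqrt{d_G(u)^2+d_G(v)^2}$. *)

From HB Require Import structures.
From mathcomp Require Import all_boot all_order all_algebra.
Set Implicit Arguments. Unset Strict Implicit. Unset Printing Implicit Defensive.
Import Order.TTheory GRing.Theory Num.Theory.

Section Graphs.
Variable n : nat.
Implicit Types (e : rel 'I_n).

Definition simple_graph e : Prop := symmetric e /\ irreflexive e.

Definition connected_graph e : Prop := forall x y : 'I_n, connect e x y.

Definition deg e (u : 'I_n) : nat := #|[pred v | e u v]|.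

Definition nedges e : nat :=
  #|[pred p : 'I_n * 'I_n | (p.1 < p.2)%N && e p.1 p.2]|.

Definition chemical e : Prop := forall u : 'I_n, (deg e u <= 4)%N.

Definition CTG e : Prop :=
  [/\ simple_graph e, connected_graph e, nedges e = n + 2 & chemical e].

Definition nv e (i : nat) : nat := #|[pred u | deg e u == i]|.

Definition me e (i j : nat) : nat :=
  #|[pred p : 'I_n * 'I_n | [&& (p.1 < p.2)%N, e p.1 p.2 &
      ((deg e p.1 == i) && (deg e p.2 == j))
      || ((deg e p.1 == j) && (deg e p.2 == i))]]|.

Definition SO (R : rcfType) e : R :=
  \sum_(u : 'I_n) \sum_(v : 'I_n | (u < v)%N && e u v)
     Num.sqrt (((deg e u) ^ 2 + (deg e v) ^ 2)%:R).

(* the pairs (i,j), 1 <= i <= j <= 4, indexing all possible m_{i,j}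
   in a chemical graph (degree-0 vertices are impossible in connected
   graphs with n >= 2 vertices, and such m's vanish anyway) *)
Definition mpairs : seq (nat * nat) :=
  [:: (1,1); (1,2); (1,3); (1,4); (2,2); (2,3); (2,4); (3,3); (3,4); (4,4)].

Definition mtable e (vals : seq ((nat * nat) * nat)) : Prop :=
  forall ij, ij \in mpairs ->
    me e ij.1 ij.2 = odflt 0 (omap snd (ohead (filter (fun p => p.1 == ij) vals))).

Definition gamma9 (j : nat) e : Prop :=
  CTG e /\ [/\ nv e 4 = 0, nv e 3 = 4, nv e 2 = n - 4, nv e 1 = 0 &
      mtable e [:: ((2,3), 2 + 2 * j); ((3,3), 5 - j); ((2,2), n - 5 - j)]].

Definition gamma65 e : Prop :=
  CTG e /\ [/\ nv e 4 = 0, nv e 3 = 5, nv e 2 = n - 6, nv e 1 = 1 &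
      mtable e [:: ((1,2), 1); ((2,3), 1); ((3,3), 7); ((2,2), n - 7)]].

End Graphs.

(* Put s = sqrt 2 and delta(i, j) = sqrt (i^2 + j^2) - s (i + j) / 2, so that
   delta >= 0 by the QM-AM inequality and delta(i, i) = 0. Summing over the
   edges, SO(G) = s M1 / 2 + sum_ij m_ij delta(i, j), and for a chemical
   tricyclic graph the first Zagreb index is M1 = 4n + 20 + 2K with
   K = 3 n_0 + n_1 + n_4; hence SO(G) = s (2n + 10 + K) + sum_ij m_ij delta(i, j).
   If K = 0 all degrees are 2 or 3, n_3 = 4, and G lies in gamma_{9+j} for
   m_23 = 2j + 2; these classes are ordered because delta(2, 3) > 0. The class
   gamma_65 has value s (2n + 11) + delta(1, 2) + delta(2, 3), and every other
   graph has K >= 2, or K = 1 with a larger excess sum; rational enclosures of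
   the few square roots involved settle the comparisons. *)

From HB Require Import structures.
From mathcomp Require Import all_boot all_order all_algebra.
From mathcomp Require Import zify ring lra.
Import Order.TTheory GRing.Theory Num.Theory.

Set Implicit Arguments. Unset Strict Implicit. Unset Printing Implicit Defensive.

Definition deg_pair (i j a b : nat) : bool :=
  (a == i) && (b == j) || (a == j) && (b == i).

Lemma sum_mpairs_deg_pair (V : nmodType) (F : nat -> nat -> V) a b :
  (forall i j, F i j = F j i) -> 0 < a <= 4 -> 0 < b <= 4 ->
  (\sum_(ij <- mpairs) F ij.1 ij.2 *+ deg_pair ij.1 ij.2 a b)%R = F a b.
Proof.
move=> FC; rewrite /mpairs !big_cons big_nil /deg_pair.
by case: a => [|[|[|[|[|a]]]]] // _; case: b => [|[|[|[|[|b]]]]] // _ /=;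
  rewrite ?mulr0n ?mulr1n ?add0r ?addr0 // FC.
Qed.

Section SimpleGraph.
Variables (n : nat) (e : rel 'I_n).
Hypotheses (e_sym : symmetric e) (e_irr : irreflexive e).
Local Notation d := (deg e).

Lemma degE u : d u = \sum_v e u v.
Proof. by rewrite /deg -sum1_card big_mkcond; apply: eq_bigr => v _; rewrite inE. Qed.

Lemma deg_gt0 u v : e u v -> 0 < d u.
Proof. by move=> huv; rewrite degE (bigD1 v) //= huv. Qed.

Lemma nvE i : nv e i = \sum_u (d u == i).
Proof. by rewrite /nv -sum1_card big_mkcond; apply: eq_bigr => u _; rewrite inE. Qed.

Lemma meC i j : me e i j = me e j i.
Proof. by apply: eq_card => p; rewrite !inE orbC. Qed.

Lemma meE i j :
  me e i j = \sum_(u : 'I_n) \sum_(v : 'I_n | (u < v) && e u v) deg_pair i j (d u) (d v).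
Proof.
rewrite pair_big_dep /= /me -sum1_card big_mkcond [RHS]big_mkcond /=.
by apply: eq_bigr => p _; rewrite inE andbA; case: ((_ < _) && _) => //; case: deg_pair.
Qed.

Lemma nedgesE : nedges e = \sum_(u : 'I_n) \sum_(v : 'I_n | (u < v) && e u v) 1.
Proof. by rewrite pair_big_dep /= /nedges -sum1_card. Qed.

Lemma me_gt0 u v : e u v -> 0 < me e (d u) (d v).
Proof.
move=> huv; apply/card_gt0P.
have [ltuv|ltvu|/val_inj eq_uv] := ltngtP u v.
- by exists (u, v); rewrite inE /= ltuv huv !eqxx.
- by exists (v, u); rewrite inE /= ltvu e_sym huv !eqxx orbT.
- by move: huv; rewrite eq_uv e_irr.
Qed.

Lemma me_diag_gt0 i : 0 < me e i i -> 1 < nv e i.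
Proof.
case/card_gt0P => -[u v]; rewrite inE /= orbb => /and3P[ltuv _ /andP[/eqP du /eqP dv]].
have sub_uv : [set u; v] \subset [pred w | d w == i].
  by apply/subsetP => w; rewrite !inE => /orP[] /eqP ->; rewrite ?du ?dv.
by move/subset_leq_card: sub_uv; rewrite cards2 neq_ltn ltuv.
Qed.

Lemma sum_edges_endpoints (g : 'I_n -> nat) :
  \sum_(u : 'I_n) \sum_(v : 'I_n | (u < v) && e u v) (g u + g v) = \sum_u d u * g u.
Proof.
have arc_split u v :
    e u v * g u = ((u < v) && e u v) * g u + ((v < u) && e v u) * g u.
  by have [ltuv|ltvu|/val_inj <-] := ltngtP u v; rewrite ?e_irr //= ?addn0 e_sym.
under [RHS]eq_bigr do rewrite degE big_distrl /=.
under [RHS]eq_bigr do under eq_bigr do rewrite arc_split.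
under [RHS]eq_bigr do rewrite big_split /=.
rewrite [RHS]big_split /= [X in _ = _ + X]exchange_big -big_split /=.
apply: eq_bigr => u _; rewrite big_mkcond -big_split /=; apply: eq_bigr => v _.
by case: (_ && _); rewrite ?mul1n.
Qed.

Lemma connected_closed_card (P : pred 'I_n) : connected_graph e ->
  (forall u v, e u v -> P u -> P v) -> #|P| = 0 \/ #|P| = n.
Proof.
move=> conn closedP; have [->|] := posnP #|P|; first by left.
case/card_gt0P => x Px; right; rewrite -[RHS]card_ord; apply: eq_card => y.
have closedP' : closed e P.
  by move=> u v huv; apply/idP/idP; apply: closedP; rewrite // e_sym.
by rewrite inE -(closed_connect closedP' (conn x y)) Px.
Qed.

Hypothesis deg_le4 : forall u, d u <= 4.

Lemma nv_partition : n = \sum_(i < 5) nv e i.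
Proof.
rewrite -[LHS]card_ord -sum1_card (partition_big (fun u => inord (d u) : 'I_5) xpredT) //=.
apply: eq_bigr => i _; rewrite /nv -sum1_card; apply: eq_bigl => u.
by rewrite inE -val_eqE /= inordK // ltnS.
Qed.

Lemma sum_edges_deg_classes (V : nmodType) (F : nat -> nat -> V) :
  (forall i j, F i j = F j i) ->
  (\sum_(u : 'I_n) \sum_(v : 'I_n | (u < v)%N && e u v) F (d u) (d v) =
   \sum_(ij <- mpairs) F ij.1 ij.2 *+ me e ij.1 ij.2)%R.
Proof.
move=> FC; under [RHS]eq_bigr do rewrite meE -sumrMnr.
under [RHS]eq_bigr do under eq_bigr do rewrite -sumrMnr.
rewrite [RHS]exchange_big; apply: eq_bigr => u _.
rewrite [RHS]exchange_big; apply: eq_bigr => v /andP[_ huv].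
have hvu : e v u by rewrite e_sym.
by rewrite sum_mpairs_deg_pair // !deg_le4 !andbT; [apply: deg_gt0 huv | apply: deg_gt0 hvu].
Qed.

Lemma closed_deg_class_card i : connected_graph e ->
  (forall j, j != i -> 0 < j <= 4 -> me e i j = 0) -> nv e i = 0 \/ nv e i = n.
Proof.
move=> conn no_exit; apply: (connected_closed_card (P := [pred u | d u == i])) => //.
move=> u v huv /eqP du /=; apply/negPn/negP => dv_ne_i.
have hvu : e v u by rewrite e_sym.
have := me_gt0 huv; rewrite du no_exit //.
by rewrite deg_le4 (deg_gt0 hvu).
Qed.

Lemma nedges_deg_classes : nedges e = \sum_(ij <- mpairs) me e ij.1 ij.2.
Proof.
rewrite nedgesE (@sum_edges_deg_classes _ (fun _ _ => 1%N)) //.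
by apply: eq_bigr => ij _; rewrite natn.
Qed.

Lemma handshake_deg_class i :
  i * nv e i = \sum_(ij <- mpairs) ((ij.1 == i) + (ij.2 == i)) * me e ij.1 ij.2.
Proof.
rewrite nvE big_distrr /= (eq_bigr (fun u => d u * (d u == i))); last first.
  by move=> u _; case: (d u =P i) => [->|_]; rewrite ?muln0.
rewrite -sum_edges_endpoints (@sum_edges_deg_classes _ (fun a b => (a == i) + (b == i))).
  by apply: eq_bigr => ij _; rewrite -mulr_natr natn.
by move=> a b; rewrite addnC.
Qed.

End SimpleGraph.

Lemma mtableP n (e : rel 'I_n) vals : mtable e vals <->
  all (fun ij => me e ij.1 ij.2 ==
         odflt 0 (omap snd (ohead (filter (fun p => p.1 == ij) vals)))) mpairs.
Proof. by split=> [h|/allP h ij /h /eqP //]; apply/allP => ij /h ->. Qed.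

Section SomborWeights.
Local Open Scope ring_scope.
Variable R : rcfType.

Definition sombor_weight (a b : nat) : R := Num.sqrt (a ^ 2 + b ^ 2)%N%:R.

Definition sombor_excess (a b : nat) : R :=
  sombor_weight a b - (a + b)%N%:R * Num.sqrt 2 / 2.

Lemma sombor_excess_ge0 a b : 0 <= sombor_excess a b.
Proof.
have s_ge0 := sqrtr_ge0 (2 : R).
have s_sq : Num.sqrt 2 ^+ 2 = 2 :> R by rewrite sqr_sqrtr ?ler0n.
rewrite /sombor_excess; set c := (a + b)%N%:R * Num.sqrt 2 / 2.
have c_ge0 : 0 <= c by rewrite /c; apply: divr_ge0 => //; apply: mulr_ge0.
rewrite subr_ge0 /sombor_weight -(ger0_norm c_ge0) -sqrtr_sqr ler_sqrt ?ler0n //.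
have qm_am : ((a + b) ^ 2 <= 2 * (a ^ 2 + b ^ 2))%N.
  by rewrite sqrnD; have := (nat_Cauchy a b).1; lia.
have -> : c ^+ 2 = (a + b)%N%:R ^+ 2 / 2.
  by rewrite /c !exprMn s_sq exprVn; field.
rewrite ler_pdivrMr // -natrX mulrC -natrM ler_nat; lia.
Qed.

Lemma sombor_excess_diag a : sombor_excess a a = 0.
Proof.
rewrite /sombor_excess /sombor_weight (_ : (a ^ 2 + a ^ 2)%N%:R = a%:R ^+ 2 * 2).
  by rewrite sqrtrM ?sqr_ge0 // sqrtr_sqr ger0_norm // natrD; field.
by rewrite natrD natrX; ring.
Qed.

Lemma sqrt_between (x lo hi : R) :
  0 <= lo -> 0 <= hi -> lo ^+ 2 < x < hi ^+ 2 -> lo < Num.sqrt x < hi.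
Proof.
move=> lo_ge0 hi_ge0 /andP[lo_x x_hi].
have x_gt0 : 0 < x by apply: le_lt_trans lo_x; exact: sqr_ge0.
rewrite -(ger0_norm lo_ge0) -(ger0_norm hi_ge0) -!sqrtr_sqr.
by rewrite !ltr_sqrt ?lo_x ?x_hi // (lt_trans x_gt0).
Qed.

Local Notation s := (Num.sqrt 2 : R).
Local Notation w := sombor_weight.
Local Notation δ := sombor_excess.

Lemma sombor_weight_enclosures :
  [/\ 239/169 < s < 338/239, 682/305 < w 1 2 < 843/377,
      838/265 < w 1 3 < 721/228, 1042/289 < w 2 3 < 649/180 &
      1364/305 < w 2 4 < 1525/341].
Proof. by split; apply: sqrt_between; lra. Qed.

Lemma sombor_weight_3_4 : w 3 4 = 5.
Proof. by rewrite /w (_ : (3 ^ 2 + 4 ^ 2)%N = 5 ^ 2)%N // natrX sqrtr_sqr ger0_norm. Qed.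

Lemma gamma_chain_excess_bounds : 0 < δ 2 3 /\ 11 * δ 2 3 < s + δ 1 2.
Proof.
have [/andP[s_lo s_hi] /andP[w12_lo w12_hi] _ /andP[w23_lo w23_hi] _] :=
  sombor_weight_enclosures.
by rewrite /δ; split; lra.
Qed.

Lemma gamma65_excess_bounds :
  [/\ δ 1 2 + δ 2 3 < s, δ 1 2 + δ 2 3 < 4 * δ 3 4, δ 3 4 <= δ 2 4 &
      δ 1 2 + δ 2 3 < δ 1 3].
Proof.
have [/andP[s_lo s_hi] /andP[w12_lo w12_hi] /andP[w13_lo w13_hi]
      /andP[w23_lo w23_hi] /andP[w24_lo w24_hi]] := sombor_weight_enclosures.
by rewrite /δ sombor_weight_3_4; split; lra.
Qed.

End SomborWeights.

Lemma SO_deg_classes (R : rcfType) n (e : rel 'I_n) :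
  simple_graph e -> chemical e ->
  (SO R e = \sum_(ij <- mpairs) (me e ij.1 ij.2)%:R * sombor_weight R ij.1 ij.2)%R.
Proof.
move=> [e_sym _] deg_le4.
rewrite /SO (sum_edges_deg_classes e_sym deg_le4 (F := sombor_weight R)).
  by apply: eq_bigr => ij _; rewrite GRing.mulr_natl.
by move=> a b; rewrite /sombor_weight addnC.
Qed.

Section ChemicalTricyclic.
Variables (n : nat) (e : rel 'I_n).
Hypothesis e_CTG : CTG e.
Local Notation m := (me e).
(* K = \sum_u (d_u - 2)(d_u - 3) / 2 *)
Local Notation K := (3 * nv e 0 + nv e 1 + nv e 4).

Lemma CTG_linear_system :
  [/\ n = nv e 0 + nv e 1 + nv e 2 + nv e 3 + nv e 4,
      n + 2 = m 1 1 + m 1 2 + m 1 3 + m 1 4 + m 2 2 + m 2 3 + m 2 4 +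
              m 3 3 + m 3 4 + m 4 4 &
      [/\ nv e 1 = 2 * m 1 1 + m 1 2 + m 1 3 + m 1 4,
          2 * nv e 2 = m 1 2 + 2 * m 2 2 + m 2 3 + m 2 4,
          3 * nv e 3 = m 1 3 + m 2 3 + 2 * m 3 3 + m 3 4 &
          4 * nv e 4 = m 1 4 + m 2 4 + m 3 4 + 2 * m 4 4]].
Proof.
case: e_CTG => [[e_sym e_irr] _ edges deg_le4].
have hv := nv_partition deg_le4; rewrite !big_ord_recr big_ord0 /= in hv.
have hE := nedges_deg_classes e_sym deg_le4.
have hd := handshake_deg_class e_sym e_irr deg_le4.
move: hE (hd 1) (hd 2) (hd 3) (hd 4); rewrite /mpairs !big_cons !big_nil /=.
by move=> hE h1 h2 h3 h4; split; [lia | lia | split; lia].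
Qed.

Lemma CTG_deg3_class_card :
  m 1 3 = 0 -> m 2 3 = 0 -> m 3 4 = 0 -> nv e 3 = 0 \/ nv e 3 = n.
Proof.
case: e_CTG => [[e_sym e_irr] conn _ deg_le4] m13 m23 m34.
apply: closed_deg_class_card => // j j_ne3 j_range.
have [->|[->|->]] : j = 1 \/ j = 2 \/ j = 4 by lia.
all: by rewrite // meC.
Qed.

Lemma first_zagreb_CTG :
  \sum_(ij <- mpairs) (ij.1 + ij.2) * m ij.1 ij.2 = 4 * n + 20 + 2 * K.
Proof.
have [hv hE [h1 h2 h3 h4]] := CTG_linear_system.
by rewrite /mpairs !big_cons big_nil /=; lia.
Qed.

Lemma CTG_K0_gamma9 : 6 <= n -> K = 0 -> exists2 j, j <= 5 & gamma9 j e.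
Proof.
move=> hn K0; have [hv hE [h1 h2 h3 h4]] := CTG_linear_system.
have m23_gt0 : 0 < m 2 3.
  by rewrite lt0n; apply/eqP => m23; case: (CTG_deg3_class_card _ m23 _); lia.
exists (m 2 3 %/ 2).-1; first lia.
split=> //; split; [lia | lia | lia | lia |].
by apply/mtableP => /=; lia.
Qed.

Lemma CTG_K1_cases : K = 1 -> ~ gamma65 e ->
  [\/ m 2 4 + m 3 4 = 4, m 1 3 = 1 | m 1 2 = 1 /\ 1 < m 2 3].
Proof.
move=> K1 not65; have [hv hE [h1 h2 h3 h4]] := CTG_linear_system.
have m44 : m 4 4 = 0 by move: (@me_diag_gt0 _ e 4); lia.
have [n4|n1] : nv e 4 = 1 \/ nv e 1 = 1 by lia.
  by apply: Or31; lia.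
have [m13|m12] : m 1 3 = 1 \/ m 1 2 = 1 by lia.
  exact: Or32.
apply: Or33; split=> //.
have [m23|[m23|//]] : m 2 3 = 0 \/ m 2 3 = 1 \/ 1 < m 2 3 by lia.
  by case: (CTG_deg3_class_card _ m23 _); lia.
case: not65; split=> //; split; [lia | lia | lia | lia |].
by apply/mtableP => /=; lia.
Qed.

End ChemicalTricyclic.

Section SomborTricyclic.
Local Open Scope ring_scope.
Variable R : rcfType.
Local Notation s := (Num.sqrt 2 : R).
Local Notation δ := (sombor_excess R).

Lemma SO_CTG n (e : rel 'I_n) : CTG e ->
  SO R e = s * (2 * n + 10)%N%:R + s * (3 * nv e 0 + nv e 1 + nv e 4)%N%:R +
    ((me e 1 2)%:R * δ 1 2 + (me e 1 3)%:R * δ 1 3 + (me e 1 4)%:R * δ 1 4 +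
     (me e 2 3)%:R * δ 2 3 + (me e 2 4)%:R * δ 2 4 + (me e 3 4)%:R * δ 3 4).
Proof.
move=> e_CTG; have [simple_e _ _ deg_le4] := e_CTG.
have w_split a b : sombor_weight R a b = δ a b + (a + b)%:R * s / 2.
  by rewrite subrK.
rewrite SO_deg_classes //; under eq_bigr do rewrite w_split mulrDr.
rewrite big_split /= addrC; congr (_ + _).
  rewrite -mulrDr -natrD.
  have -> : s * (2 * n + 10 + (3 * nv e 0 + nv e 1 + nv e 4))%N%:R =
            (\sum_(ij <- mpairs) (ij.1 + ij.2) * me e ij.1 ij.2)%N%:R * s / 2.
    by rewrite first_zagreb_CTG // !natrD; lra.
  rewrite natr_sum !mulr_suml; apply: eq_bigr => ij _.
  by rewrite natrM; ring.
by rewrite /mpairs !big_cons big_nil /= !sombor_excess_diag; ring.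
Qed.

Lemma SO_gamma9 n (e : rel 'I_n) j : gamma9 j e ->
  SO R e = s * (2 * n + 10)%N%:R + (2 + 2 * j)%N%:R * δ 2 3.
Proof.
move=> [e_CTG [n4 n3 n2 n1 hm]]; have [hv _ _] := CTG_linear_system e_CTG.
have K0 : (3 * nv e 0 + nv e 1 + nv e 4 = 0)%N by lia.
by rewrite SO_CTG // K0 !(hm (_, _)) //=; ring.
Qed.

Lemma SO_gamma65 n (e : rel 'I_n) : gamma65 e ->
  SO R e = s * (2 * n + 10)%N%:R + s + δ 1 2 + δ 2 3.
Proof.
move=> [e_CTG [n4 n3 n2 n1 hm]]; have [hv _ _] := CTG_linear_system e_CTG.
have K1 : (3 * nv e 0 + nv e 1 + nv e 4 = 1)%N by lia.
by rewrite SO_CTG // K1 !(hm (_, _)) //=; ring.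
Qed.

Lemma gamma65_lt_SO n (e : rel 'I_n) : (6 <= n)%N -> CTG e ->
  ~ (exists2 j, (j <= 5)%N & gamma9 j e) -> ~ gamma65 e ->
  s * (2 * n + 10)%N%:R + s + δ 1 2 + δ 2 3 < SO R e.
Proof.
move=> hn e_CTG not9 not65; rewrite SO_CTG //.
have term_ge0 i j : 0 <= (me e i j)%:R * δ i j by rewrite mulr_ge0 ?sombor_excess_ge0.
have := term_ge0 1 2; have := term_ge0 1 3; have := term_ge0 1 4.
have := term_ge0 2 3; have := term_ge0 2 4; have := term_ge0 3 4.
have [lt_s lt_d34 d34_le_d24 lt_d13] := gamma65_excess_bounds R.
have [K2|[K1|K0]] : (2 <= 3 * nv e 0 + nv e 1 + nv e 4 \/
                     3 * nv e 0 + nv e 1 + nv e 4 = 1 \/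
                     3 * nv e 0 + nv e 1 + nv e 4 = 0)%N by lia.
- have : s * 2 <= s * (3 * nv e 0 + nv e 1 + nv e 4)%N%:R.
    by rewrite ler_wpM2l ?sqrtr_ge0 // (ler_nat R 2).
  lra.
- rewrite K1 mulr1; case: (CTG_K1_cases e_CTG K1 not65) => [m4|m13|[m12 m23]].
  + have : (me e 2 4)%:R * δ 3 4 <= (me e 2 4)%:R * δ 2 4 by rewrite ler_wpM2l.
    have : (me e 2 4)%:R * δ 3 4 + (me e 3 4)%:R * δ 3 4 = 4 * δ 3 4.
      by rewrite -mulrDl -natrD m4.
    lra.
  + rewrite m13 mul1r; lra.
  + have : 2 * δ 2 3 <= (me e 2 3)%:R * δ 2 3.
      by rewrite ler_wpM2r ?sombor_excess_ge0 // (ler_nat R 2).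
    have [d23_gt0 _] := gamma_chain_excess_bounds R.
    rewrite m12 mul1r; lra.
- by case: not9; apply: CTG_K0_gamma9.
Qed.

End SomborTricyclic.

Local Open Scope ring_scope.

Theorem theorem3p12 (R : rcfType) (n : nat) (hn : (6 <= n)%N)
  (G1 G2 G3 G4 G5 G6 G7 G : rel 'I_n) :
  gamma9 0 G1 -> gamma9 1 G2 -> gamma9 2 G3 -> gamma9 3 G4 ->
  gamma9 4 G5 -> gamma9 5 G6 -> gamma65 G7 ->
  CTG G ->
  ~ (gamma9 0 G \/ gamma9 1 G \/ gamma9 2 G \/ gamma9 3 G \/
     gamma9 4 G \/ gamma9 5 G \/ gamma65 G) ->
  (SO R G1 < SO R G2) /\ (SO R G2 < SO R G3) /\ (SO R G3 < SO R G4) /\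
  (SO R G4 < SO R G5) /\ (SO R G5 < SO R G6) /\ (SO R G6 < SO R G7) /\
  (SO R G7 < SO R G).
Proof.
move=> g1 g2 g3 g4 g5 g6 g7 G_CTG G_other.
have not9 : ~ (exists2 j, (j <= 5)%N & gamma9 j G).
  by move=> [[|[|[|[|[|[|j]]]]]] // _ gj]; apply: G_other; tauto.
have not65 : ~ gamma65 G by move=> g; apply: G_other; tauto.
have G_gt := gamma65_lt_SO R hn G_CTG not9 not65.
have [d23_gt0 d23_small] := gamma_chain_excess_bounds R.
rewrite (SO_gamma9 R g1) (SO_gamma9 R g2) (SO_gamma9 R g3) (SO_gamma9 R g4)
  (SO_gamma9 R g5) (SO_gamma9 R g6) (SO_gamma65 R g7).
by do !split; lra.
Qed.
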